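(* Let $\vec{G}$ be a DDMOG on $n$ vertices with $imb(\vec{G})=0$, with a DDM labeling $g$, and index its vertices $v_1,\dots,v_n$ so that $g(v_i)=i$. Let $\vec{H}$ be an oriented graph on $m$ vertices, vertex-disjoint from $\vec{G}$, with a bijective labeling $h:V(\vec{H})\to\{1,2,\dots,m\}$ such that every vertex $v\in V(\vec{H})$ satisfies either $m+1\le|wt_h(v)|\le m+n$ or $wt_h(v)=0$, and such that $\sum_{v\in V_h^{i+m}(\vec{H})}h(v)=\sum_{v\in V_h^{-i-m}(\vec{H})}h(v)$ for each $1\le i\le n$. Then the weighted sum $\vec{G}\oplus_{wt_h}^m\vec{H}$ is a DDMOG on $n+m$ vertices.
   Context: An oriented graph is a finite digraph without loops such that whenever $(u,v)$ is an arc, $(v,u)$ is not. For a vertex $v$, $N^+(v)=\{x:(x,v)\text{ is an arc}\}$, $N^-(v)=\{x:(v,x)\text{ is an arc}\}$, $imb(v)=|N^+(v)|-|N^-(v)|$ and $imb(\vec{G})=\max_v|imb(v)|$. For a labeling $f$, $wt_f(v)=\sum_{x\in N^+(v)}f(x)-\sum_{x\in N^-(v)}f(x)$. A DDM labeling of an oriented graph on $n$ vertices is a bijection $f:V\to\{1,\dots,n\}$ with $wt_f(v)=0$ for all $v$; a DDMOG is an oriented graph admitting one. For an oriented graph $\vec{H}$ with labeling $h$ and integer $j$, $V_h^{j}(\vec{H})=\{u:wt_h(u)=j\}$. Weighted sum: let $\vec{G}$ have vertices $v_1,\dots,v_n$ (indexed by a labeling $g$ with $g(v_i)=i$), $s\in\mathbb{Z}$,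 and $\vec{H}$ (vertex-disjoint from $\vec{G}$) have a labeling $h:V(\vec{H})\to\mathbb{Z}^+$ with $\{|wt_h(u)|:u\in V(\vec{H})\}\subseteq\{0\}\cup\{i+s:1\le i\le n\}$; then $\vec{G}\oplus_{wt_h}^s\vec{H}$ has vertex set $V(\vec{G})\cup V(\vec{H})$ and arc set $E(\vec{G})\cup E(\vec{H})\cup\bigcup_{i=1}^n(E^i\cup E^{-i})$, where $E^i=\{(v_i,u):u\in V_h^{-i-s}(\vec{H})\}$ and $E^{-i}=\{(u,v_i):u\in V_h^{i+s}(\vec{H})\}$. *)

From mathcomp Require Import all_boot all_order all_algebra.
Set Implicit Arguments. Unset Strict Implicit. Unset Printing Implicit Defensive.
Import Order.TTheory GRing.Theory Num.Theory.
Local Open Scope ring_scope.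

Definition oriented (V : finType) (E : rel V) : Prop :=
  (forall v, ~~ E v v) /\ (forall u v, E u v -> ~~ E v u).

Definition Nplus (V : finType) (E : rel V) (v : V) : {set V} := [set x | E x v].
Definition Nminus (V : finType) (E : rel V) (v : V) : {set V} := [set x | E v x].

Definition imb (V : finType) (E : rel V) (v : V) : int :=
  (#|Nplus E v|%:Z - #|Nminus E v|%:Z).

Definition wt (V : finType) (E : rel V) (f : V -> nat) (v : V) : int :=
  (\sum_(x in Nplus E v) (f x)%:Z) - (\sum_(x in Nminus E v) (f x)%:Z).

Definition bij_labeling (V : finType) (f : V -> nat) : Prop :=
  injective f /\ (forall v, (0 < f v <= #|V|)%N).

Definition DDM_labeling (V : finType) (E : rel V) (f : V -> nat) : Prop :=
  bij_labeling f /\ (forall v, wt E f v = 0).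

Definition DDMOG (V : finType) (E : rel V) : Prop :=
  oriented E /\ exists f : V -> nat, DDM_labeling E f.

(* Weighted sum G (+)^s_{wt_h} H on vertex set VG + VH (disjoint union);
   vertex x of G plays the role of v_i with i = g x.
   E^i  = {(v_i,u) : wt_h u = -i-s},  E^{-i} = {(u,v_i) : wt_h u = i+s}. *)
Definition wsum (VG VH : finType) (EG : rel VG) (EH : rel VH)
  (g : VG -> nat) (h : VH -> nat) (s : int) : rel (VG + VH) :=
  fun a b =>
    match a, b with
    | inl x, inl y => EG x y
    | inr u, inr w => EH u w
    | inl x, inr u => wt EH h u == - ((g x)%:Z + s)
    | inr u, inl x => wt EH h u == (g x)%:Z + s
    end.

(* Label a vertex x of G by g x + m and keep h on H: the labels biject onto
   {1, ..., n + m}.  At v_i, the arcs inside G contribute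
   wt_g(v_i) + m imb(v_i) = 0 and the arcs to H contribute the difference of
   the two sums in the hypothesis.  At a vertex u of H with |wt_h(u)| = i + m,
   the only arc between u and G joins u to v_i, whose label i + m cancels
   wt_h(u); if wt_h(u) = 0 there is no such arc. *)

From mathcomp Require Import all_boot all_order all_algebra.
From mathcomp Require Import zify ring.
Set Implicit Arguments. Unset Strict Implicit. Unset Printing Implicit Defensive.
Import Order.TTheory GRing.Theory Num.Theory.
Local Open Scope ring_scope.

Lemma wtE (V : finType) (E : rel V) (f : V -> nat) (v : V) :
  wt E f v = \sum_(x | E x v) (f x)%:Z - \sum_(x | E v x) (f x)%:Z.
Proof.
by rewrite /wt /Nplus /Nminus; congr (_ - _); apply: eq_bigl => x; rewrite inE.
Qed.

Lemma wt_addn (V : finType) (E : rel V) (f : V -> nat) (c : nat) (v : V) :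
  wt E (fun x => f x + c)%N v = wt E f v + c%:Z * imb E v.
Proof.
rewrite /wt /imb; under eq_bigr do rewrite PoszD; under [X in _ - X]eq_bigr do rewrite PoszD.
rewrite !big_split /= !sumr_const; ring.
Qed.

Lemma bij_labeling_surj (V : finType) (f : V -> nat) (k : nat) :
  bij_labeling f -> (0 < k <= #|V|)%N -> exists x, f x = k.
Proof.
move=> [f_inj f_range] k_range.
have [_ same_elems] : (size (map f (enum V)) = size (iota 1 #|V|))
                      * (map f (enum V) =i iota 1 #|V|).
  apply: uniq_min_size; first by rewrite map_inj_uniq ?enum_uniq.
  - by move=> _ /mapP [x _ ->]; rewrite mem_iota; have := f_range x; lia.
  - by rewrite size_map size_iota -cardE.
have : k \in map f (enum V) by rewrite same_elems mem_iota; lia.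
by case/mapP=> x _ ->; exists x.
Qed.

Lemma sum_shifted_label (V : finType) (g : V -> nat) (s k : int) :
  bij_labeling g ->
  \sum_(x | k == (g x)%:Z + s) ((g x)%:Z + s)
    = if s < k <= s + #|V|%:Z then k else 0.
Proof.
move=> g_bij; have [g_inj g_range] := g_bij.
case: ifP => k_range.
- have [x0 g_x0] : exists x0, g x0 = `|k - s|%N by apply: (bij_labeling_surj g_bij); lia.
  rewrite (big_pred1 x0) => [|x]; first lia.
  by apply/eqP/eqP => [k_eq|->]; [apply: g_inj; lia | lia].
- rewrite big_pred0 // => x; apply/eqP => k_eq.
  by have := g_range x; move: k_range; lia.
Qed.

Section WeightedSum.

Variables (VG VH : finType) (EG : rel VG) (EH : rel VH).
Variables (g : VG -> nat) (h : VH -> nat).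

Lemma oriented_wsum (s : int) :
  oriented EG -> oriented EH -> (forall x, (g x)%:Z + s != 0) ->
  oriented (wsum EG EH g h s).
Proof.
move=> [EG_irr EG_asym] [EH_irr EH_asym] g_shift_neq0; split; first by case.
case=> [x|u] [y|w] /=; [exact: EG_asym | | | exact: EH_asym].
- by move=> /eqP ->; apply/negP => /eqP; move: (g_shift_neq0 x); lia.
- by move=> /eqP ->; apply/negP => /eqP; move: (g_shift_neq0 y); lia.
Qed.

Lemma wt_wsum_inl (s : int) (f : VG + VH -> nat) (x : VG) :
  wt (wsum EG EH g h s) f (inl x) = wt EG (f \o inl) x
    + (\sum_(u | wt EH h u == (g x)%:Z + s) (f (inr u))%:Z
       - \sum_(u | wt EH h u == - ((g x)%:Z + s)) (f (inr u))%:Z).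
Proof. by rewrite [LHS]wtE [wt EG _ x]wtE !big_sumType /=; ring. Qed.

Lemma wt_wsum_inr (s : int) (f : VG + VH -> nat) (u : VH) :
  wt (wsum EG EH g h s) f (inr u) = wt EH (f \o inr) u
    + (\sum_(x | wt EH h u == - ((g x)%:Z + s)) (f (inl x))%:Z
       - \sum_(x | wt EH h u == (g x)%:Z + s) (f (inl x))%:Z).
Proof. by rewrite [LHS]wtE [wt EH _ u]wtE !big_sumType /=; ring. Qed.

Definition wsum_labeling (s : nat) (a : VG + VH) : nat :=
  match a with inl x => (g x + s)%N | inr u => h u end.

Lemma bij_wsum_labeling (s : nat) :
  #|VH| = s -> bij_labeling g -> bij_labeling h -> bij_labeling (wsum_labeling s).
Proof.
move=> VH_card [g_inj g_range] [h_inj h_range]; rewrite VH_card in h_range.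
split.
- case=> [x|u] [y|w] /= same_label.
  + by congr inl; apply: g_inj; lia.
  + by have := g_range x; have := h_range w; lia.
  + by have := g_range y; have := h_range u; lia.
  + by congr inr; apply: h_inj.
- rewrite card_sum VH_card; set n := #|VG| in g_range *.
  by case=> [x|u] /=; [have := g_range x | have := h_range u]; lia.
Qed.

Lemma wt_wsum_labeling_inl (s : nat) (x : VG) :
  wt EG g x = 0 -> imb EG x = 0 ->
  (\sum_(u | wt EH h u == (g x + s)%:Z) h u)%N
    = (\sum_(u | wt EH h u == - (g x + s)%:Z) h u)%N ->
  wt (wsum EG EH g h s%:Z) (wsum_labeling s) (inl x) = 0.
Proof.
move=> wt0 imb0 /(congr1 Posz); rewrite !(big_morph Posz PoszD (erefl 0%:Z)) => sums_eq.
rewrite wt_wsum_inl /= wt_addn wt0 imb0 -PoszD sums_eq; ring.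
Qed.

Lemma wt_wsum_labeling_inr (s : nat) (u : VH) :
  bij_labeling g ->
  (s < `|wt EH h u| <= s + #|VG|)%N \/ wt EH h u = 0 ->
  wt (wsum EG EH g h s%:Z) (wsum_labeling s) (inr u) = 0.
Proof.
move=> g_bij wt_range.
have shifted_sum k : \sum_(x | k == (g x)%:Z + s%:Z) (wsum_labeling s (inl x))%:Z
    = if s%:Z < k <= s%:Z + #|VG|%:Z then k else 0.
  by rewrite -(sum_shifted_label _ _ g_bij); apply: eq_bigr => x _; exact: PoszD.
rewrite wt_wsum_inr -[wsum_labeling s \o inr]/h.
rewrite (eq_bigl (fun x => - wt EH h u == (g x)%:Z + s%:Z)) => [|x].
  by rewrite !shifted_sum; case: ifP; case: ifP; move: wt_range; lia.
by rewrite eqr_oppLR.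
Qed.

End WeightedSum.

Theorem theorem7 (VG VH : finType) (EG : rel VG) (EH : rel VH)
  (g : VG -> nat) (h : VH -> nat) (n m : nat) :
  #|VG| = n -> #|VH| = m ->
  oriented EG -> DDM_labeling EG g -> (forall v, imb EG v = 0) ->
  oriented EH -> bij_labeling h ->
  (forall v, (m.+1 <= `|wt EH h v|%N <= m + n)%N \/ wt EH h v = 0) ->
  (forall i : nat, (1 <= i <= n)%N ->
     (\sum_(v | wt EH h v == (i + m)%:Z) h v)%N
     = (\sum_(v | wt EH h v == - (i + m)%:Z) h v)%N) ->
  DDMOG (wsum EG EH g h m%:Z) /\ #|{: VG + VH}| = (n + m)%N.
Proof.
move=> <- VH_card EG_or [g_bij g_wt0] g_imb0 EH_or h_bij h_wt_range h_sums.
split; last by rewrite card_sum VH_card addnC.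
have g_range := proj2 g_bij.
split.
  by apply: (oriented_wsum _ EG_or EH_or) => x; have := g_range x; lia.
exists (wsum_labeling g h m); split; first exact: bij_wsum_labeling VH_card g_bij h_bij.
case=> [x|u].
- exact: wt_wsum_labeling_inl (g_wt0 x) (g_imb0 x) (h_sums _ (g_range x)).
- exact: wt_wsum_labeling_inr g_bij (h_wt_range u).
Qed.
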